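(* Let $f:\mathbb{R}^n\to\mathbb{R}$ be a polynomial of degree at most $4$, let $\mu_f$ be its Steklov function, and let $C:=\sum_{i=1}^n\nabla^2 f_{ii}$, where $f_{ii}=\partial^2 f/\partial x_i^2$. Assume the smallest eigenvalue $\lambda_n(C)$ of $C$ is positive, and fix $L>0$. Let $\theta_L:=\min_{x\in B[0,L]}\lambda_n(\nabla^2 f(x))$, where $\lambda_n(\cdot)$ denotes the smallest eigenvalue and $B[0,L]=\{x:\|x\|\le L\}$, and set \[ t_0:=\sqrt{\frac{6|\theta_L|}{\lambda_n(C)}}. \] Then $\mu_f$ is convex over $B[0,L]\times(t_0,+\infty)$, i.e., $\nabla_{xx}\mu_f(x,t)\succeq 0$ for all $(x,t)\in B[0,L]\times(t_0,+\infty)$.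
   Context: The Steklov function of a continuous $f:\mathbb{R}^n\to\mathbb{R}$ is $\mu_f(x,t)=\frac{1}{(2t)^n}\int_{x_n-t}^{x_n+t}\cdots\int_{x_1-t}^{x_1+t} f(\tau)\,d\tau_1\cdots d\tau_n$ for $x\in\mathbb{R}^n$, $t>0$; $\nabla_{xx}\mu_f$ is its Hessian with respect to $x$. For a polynomial of degree at most $4$, $C=\sum_i\nabla^2 f_{ii}$ is a constant symmetric matrix. $\|\cdot\|$ is the Euclidean norm. *)

From HB Require Import structures.
From mathcomp Require Import all_boot all_order all_algebra.
From mathcomp Require Import all_classical all_reals all_analysis.
Set Implicit Arguments. Unset Strict Implicit. Unset Printing Implicit Defensive.
Import Order.TTheory GRing.Theory Num.Theory.
Import numFieldNormedType.Exports.
Local Open Scope classical_set_scope.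
Local Open Scope ring_scope.

Section Defs.
Variables (R : realType) (n : nat).

Definition basis_vec (i : 'I_n) : 'rV[R]_n := delta_mx 0 i.

Definition eucl_norm (x : 'rV[R]_n) : R := Num.sqrt (\sum_i x 0 i ^+ 2).

Definition poly_deg_le4 (f : 'rV[R]_n -> R) : Prop :=
  exists c : {ffun 'I_n -> 'I_5} -> R,
    (forall m : {ffun 'I_n -> 'I_5}, (4 < \sum_i (m i : nat))%N -> c m = 0) /\
    forall x, f x = \sum_(m : {ffun 'I_n -> 'I_5}) c m * \prod_i x 0 i ^+ m i.

Definition partial2 (i j : 'I_n) (g : 'rV[R]_n -> R) (x : 'rV[R]_n) : R :=
  derive (fun y => derive g y (basis_vec j)) x (basis_vec i).

Definition hessian (g : 'rV[R]_n -> R) (x : 'rV[R]_n) : 'M[R]_n :=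
  \matrix_(i, j) partial2 i j g x.

Definition psd (A : 'M[R]_n) : Prop :=
  forall v : 'rV[R]_n, 0 <= (v *m A *m v^T) 0 0.

Definition smallest_eig (A : 'M[R]_n) (lam : R) : Prop :=
  eigenvalue A lam /\ forall a, eigenvalue A a -> lam <= a.

Definition set_coord (tau : 'rV[R]_n) (k : 'I_n) (u : R) : 'rV[R]_n :=
  \row_j (if j == k then u else tau 0 j).

Fixpoint iter_int (s : seq 'I_n) (f : 'rV[R]_n -> R) (x : 'rV[R]_n) (t : R)
  (tau : 'rV[R]_n) : R :=
  match s with
  | [::] => f tau
  | k :: s' => Rintegral (@lebesgue_measure R) `[x 0 k - t, x 0 k + t]
                 (fun u => iter_int s' f x t (set_coord tau k u))
  end.

(* Steklov function: outermost integral over tau_n, innermost over tau_1 *)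
Definition steklov (f : 'rV[R]_n -> R) (x : 'rV[R]_n) (t : R) : R :=
  ((2 * t) ^+ n)^-1 * iter_int (rev (enum 'I_n)) f x t x.

End Defs.

(* For a polynomial g of degree at most 4, the average of g over a segment of
   half-width t in the k-th coordinate direction is
   g + (t^2/6) d_k^2 g + (t^4/120) d_k^4 g, and d_k^4 g is a constant.  Averaging
   successively in all n directions shows that the Steklov function of a quartic f
   is mu_f(., t) = f + (t^2/6) Lap f + const, so that
   Hess mu_f(x, t) = Hess f(x) + (t^2/6) C.  For a symmetric matrix A whose
   eigenvalues are all >= th one has v A v^T >= th |v|^2, because the minimum of
   the quadratic form on the unit sphere is an eigenvalue.  Hence
   v Hess mu_f(x, t) v^T >= (theta_L + t^2 lambda_n(C) / 6) |v|^2, which is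
   nonnegative as soon as t > t_0. *)

From HB Require Import structures.
From mathcomp Require Import all_boot all_order all_algebra.
From mathcomp Require Import all_classical all_reals all_analysis.
From mathcomp Require Import ring lra.
Import Order.TTheory GRing.Theory Num.Theory.
Import numFieldNormedType.Exports.
Local Open Scope ring_scope.

(** * Averages of a quartic chain of derivatives *)

Section QuarticChain.
Variables (R : realType) (p : nat -> R -> R).
Hypothesis p_deriv : forall j u, is_derive u (1 : R) (p j) (p j.+1 u).
Hypothesis p5 : forall u, p 5 u = 0.

Lemma deriv_chain_taylor4 (c u : R) :
  p 0 u = p 0 c + p 1 c * (u - c) + p 2 c * (u - c) ^+ 2 / 2
     + p 3 c * (u - c) ^+ 3 / 6 + p 4 c * (u - c) ^+ 4 / 24.
Proof.
pose q : R -> R := cst u - id.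
have q_deriv v : is_derive v (1 : R) q (-1).
  by apply: is_derive_eq; rewrite sub0r.
(* the derivatives of the terms of [E] telescope, leaving [p 5 * q ^+ 4 / 24 = 0] *)
pose E : R -> R := p 0 + p 1 * q + 2^-1 \*: (p 2 * q ^+ 2) +
   6^-1 \*: (p 3 * q ^+ 3) + 24^-1 \*: (p 4 * q ^+ 4).
have E_deriv v : is_derive v (1 : R) E 0.
  by apply: is_derive_eq; rewrite p5 /q !fctE /= /GRing.scale /=; field.
have := is_derive_0_is_cst u c E_deriv.
rewrite /E /q !fctE /= /GRing.scale /= subrr !expr0n /= !mulr0 !addr0 => ->.
by field.
Qed.

Lemma Rintegral_deriv_chain4 (c t : R) : 0 < t ->
  Rintegral (@lebesgue_measure R) `[c - t, c + t] (p 0) =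
  2 * t * (p 0 c + t ^+ 2 / 6 * p 2 c + t ^+ 4 / 120 * p 4 c).
Proof.
move=> t_gt0.
pose r : R -> R := id - cst c.
have r_deriv u : is_derive u (1 : R) r 1.
  by apply: is_derive_eq; rewrite subr0.
(* a primitive of the Taylor expansion of [p 0] at [c] *)
pose F : R -> R := p 0 c \*: r + (p 1 c / 2) \*: r ^+ 2 + (p 2 c / 6) \*: r ^+ 3
   + (p 3 c / 24) \*: r ^+ 4 + (p 4 c / 120) \*: r ^+ 5.
have F_deriv u : is_derive u (1 : R) F (p 0 u).
  apply: is_derive_eq.
  by rewrite (deriv_chain_taylor4 c u) /r !fctE /= /GRing.scale /=; field.
have F_cont u : (F @ u --> F u)%classic.
  by apply: differentiable_continuous; apply/derivable1_diffP; exact: ex_derive.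
rewrite /Rintegral (continuous_FTC2 (F := F)).
- by rewrite /F /r !fctE /= /GRing.scale /=; field.
- by rewrite ltrD2l gt0_cp.
- by apply: derivable_within_continuous => u _; exact: ex_derive.
- split; first by move=> u _; exact: ex_derive.
  + exact/cvg_at_right_filter/F_cont.
  + exact/cvg_at_left_filter/F_cont.
- by move=> u _; rewrite derive1E derive_val.
Qed.

End QuarticChain.

Section QuarticSteklov.
Context {R : realType} {n : nat}.
Notation V := 'rV[R]_n.

(** * Polynomial functions on R^n *)

Inductive polyfun : nat -> (V -> R) -> Prop :=
| polyfunC d (c : R) : polyfun d (cst c)
| polyfunX d (i : 'I_n) : (0 < d)%N -> polyfun d (fun y => y 0 i)
| polyfunD d g h : polyfun d g -> polyfun d h -> polyfun d (fun y => g y + h y)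
| polyfunM d1 d2 d g h : polyfun d1 g -> polyfun d2 h -> (d1 + d2 <= d)%N ->
    polyfun d (fun y => g y * h y).
Arguments polyfunD {d g h}.
Arguments polyfunM {d1 d2 d g h}.

Lemma polyfun_widen {d} d' {g} : polyfun d g -> (d <= d')%N -> polyfun d' g.
Proof.
move=> Pg; elim: Pg d' => {d g} [d c|d i d_gt0|d g h _ IHg _ IHh|d1 d2 d g h Pg _ Ph _ le_d].
- by move=> d' _; exact: polyfunC.
- by move=> d' le_dd'; apply: polyfunX; exact: leq_trans le_dd'.
- by move=> d' le_dd'; apply: polyfunD; [exact: IHg | exact: IHh].
- by move=> d' le_dd'; apply: polyfunM Pg Ph _; exact: leq_trans le_dd'.
Qed.

Lemma polyfun0_cst {g} : polyfun 0 g -> exists c, g = cst c.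
Proof.
suff cst_deg0 d : polyfun d g -> d = 0%N -> exists c, g = cst c.
  by move/cst_deg0; apply.
elim=> {d g} [d c|d i|d g h _ IHg _ IHh|d1 d2 d g h _ IHg _ IHh].
- by exists c.
- by move=> + d0; rewrite d0.
- by move=> d0; have [[cg ->] [ch ->]] := (IHg d0, IHh d0); exists (cg + ch).
- move=> + d0; rewrite d0 leqn0 addn_eq0 => /andP[/eqP d1_0 /eqP d2_0].
  by have [[cg ->] [ch ->]] := (IHg d1_0, IHh d2_0); exists (cg * ch).
Qed.

Lemma polyfunZ {d} (k : R) {g} : polyfun d g -> polyfun d (fun y => k * g y).
Proof. by move=> Pg; apply: polyfunM (polyfunC 0 k) Pg _. Qed.

Lemma polyfun_sum {d} {I : Type} (s : seq I) {F : I -> V -> R} :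
  (forall k, polyfun d (F k)) -> polyfun d (fun y => \sum_(k <- s) F k y).
Proof.
move=> PF; elim: s => [|a s IH].
  rewrite (_ : (fun _ => _) = cst 0); first exact: polyfunC.
  by apply/funext => y; rewrite big_nil.
rewrite (_ : (fun _ => _) = fun y => F a y + \sum_(k <- s) F k y); first exact: polyfunD.
by apply/funext => y; rewrite big_cons.
Qed.

Lemma polyfun_continuous d g : polyfun d g -> continuous g.
Proof.
elim=> {d g} [d c|d i _|d g h _ cg _ ch|d1 d2 d g h _ cg _ ch _] x.
- exact: cst_continuous.
- exact: coord_continuous.
- exact: (continuousD (cg x) (ch x)).
- exact: (continuousM (cg x) (ch x)).
Qed.

(* A constant rather than the notation ['D_v g], which unfolds to a lambda:
   rewriting then keys on [dderive] instead of unifying arbitrary functions. *)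
Definition dderive (v : V) (g : V -> R) : V -> R := 'D_v g.

Lemma is_derive_coord (i : 'I_n) (x v : V) :
  is_derive x v (fun y : V => y 0 i) (v 0 i).
Proof.
have dq : ((fun h : R => h^-1 *: (((fun y : V => y 0 i) \o shift x) (h *: v)
      - x 0 i)) @ 0^' --> v 0 i)%classic.
  apply: cvg_near_cst; near=> h.
  rewrite /= !mxE /GRing.scale /= addrK mulrA mulVf ?mul1r //.
  by near: h; exact: nbhs_dnbhs_neq.
by apply: DeriveDef; [apply/cvg_ex; exists (v 0 i) | exact: cvg_lim dq].
Unshelve. all: by end_near. Qed.

Lemma polyfun_derivable {d g} x v : polyfun d g -> derivable g x v.
Proof.
elim=> {d g} [d c|d i _|d g h _ dg _ dh|d1 d2 d g h _ dg _ dh _].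
- exact: derivable_cst.
- by have [] := is_derive_coord i x v.
- exact: derivableD.
- exact: derivableM.
Qed.

Lemma dderiveD v {d1 d2 g h} : polyfun d1 g -> polyfun d2 h ->
  dderive v (fun y => g y + h y) = fun y => dderive v g y + dderive v h y.
Proof.
move=> Pg Ph; apply/funext => x; rewrite /dderive -[fun y => _ + _]/(g + h).
by rewrite deriveD //; [exact: polyfun_derivable Pg | exact: polyfun_derivable Ph].
Qed.

Lemma dderiveM v {d1 d2 g h} : polyfun d1 g -> polyfun d2 h ->
  dderive v (fun y => g y * h y) = fun y => g y * dderive v h y + h y * dderive v g y.
Proof.
move=> Pg Ph; apply/funext => x; rewrite /dderive -[fun y => _ * _]/(g * h).
by rewrite deriveM //; [exact: polyfun_derivable Pg | exact: polyfun_derivable Ph].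
Qed.

Lemma dderiveZ v {d g} (k : R) :
  polyfun d g -> dderive v (fun y => k * g y) = fun y => k * dderive v g y.
Proof.
move=> Pg; apply/funext => x; rewrite /dderive -[fun y => _ * _]/(k \*: g).
by rewrite deriveZ //; exact: polyfun_derivable Pg.
Qed.

Lemma dderive_cst (c : R) v : dderive v (cst c : V -> R) = cst 0.
Proof. by apply/funext => x; rewrite /dderive derive_cst. Qed.

Lemma dderive_coord (i : 'I_n) v : dderive v (fun y : V => y 0 i) = cst (v 0 i).
Proof. by apply/funext => x; have [] := is_derive_coord i x v. Qed.

Lemma dderive_polyfun0 {g} v : polyfun 0 g -> dderive v g = cst 0.
Proof. by case/polyfun0_cst=> c ->; exact: dderive_cst. Qed.

Lemma polyfun_dderive {d g} v : polyfun d g -> polyfun d.-1 (dderive v g).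
Proof.
have mul_dderive e1 e2 e (g1 h1 : V -> R) : polyfun e1 g1 -> polyfun e2 h1 ->
    polyfun e2.-1 (dderive v h1) -> (e1 + e2 <= e)%N ->
    polyfun e.-1 (fun y => g1 y * dderive v h1 y).
  case: e2 => [|e2] Pg1 Ph1 PDh1 le_e.
    rewrite dderive_polyfun0 // (_ : (fun _ => _) = cst 0); first exact: polyfunC.
    by apply/funext => y; rewrite mulr0.
  by apply: polyfunM Pg1 PDh1 _; move: le_e; rewrite addnS; case: e.
elim=> {d g} [d c|d i _|d g h Pg IHg Ph IHh|d1 d2 d g h Pg IHg Ph IHh le_d].
- by rewrite dderive_cst; exact: polyfunC.
- by rewrite dderive_coord; exact: polyfunC.
- by rewrite (dderiveD _ Pg Ph); exact: polyfunD.
- rewrite (dderiveM _ Pg Ph); apply: polyfunD.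
  + exact: mul_dderive Pg Ph IHh le_d.
  + by apply: mul_dderive Ph Pg IHg _; rewrite addnC.
Qed.

Lemma polyfun_iter_dderive {d g} v j :
  polyfun d g -> polyfun (d - j) (iter j (dderive v) g).
Proof.
move=> Pg; elim: j => [|j IH]; first by rewrite subn0.
by rewrite subnS; exact: polyfun_dderive.
Qed.

Lemma dderive_sum {d I} (s : seq I) {F : I -> V -> R} v : (forall k, polyfun d (F k)) ->
  dderive v (fun y => \sum_(k <- s) F k y) = fun y => \sum_(k <- s) dderive v (F k) y.
Proof.
move=> PF; elim: s => [|a s IH].
  by rewrite (_ : (fun _ => _) = cst 0) ?dderive_cst //; apply/funext => y; rewrite big_nil.
rewrite (_ : (fun _ => _) = fun y => F a y + \sum_(k <- s) F k y); last first.
  by apply/funext => y; rewrite big_cons.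
rewrite (dderiveD _ (PF a) (polyfun_sum s PF)) IH.
by apply/funext => y; rewrite big_cons.
Qed.

Lemma dderive_comm {d g} v w :
  polyfun d g -> dderive v (dderive w g) = dderive w (dderive v g).
Proof.
elim=> {d g} [d c|d i _|d g h Pg IHg Ph IHh|d1 d2 d g h Pg IHg Ph IHh _].
- by rewrite !dderive_cst.
- by rewrite !dderive_coord !dderive_cst.
- rewrite !(dderiveD _ Pg Ph).
  rewrite (dderiveD _ (polyfun_dderive w Pg) (polyfun_dderive w Ph)).
  by rewrite (dderiveD _ (polyfun_dderive v Pg) (polyfun_dderive v Ph)) IHg IHh.
- have [Pwg Pwh] := (polyfun_dderive w Pg, polyfun_dderive w Ph).
  have [Pvg Pvh] := (polyfun_dderive v Pg, polyfun_dderive v Ph).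
  rewrite !(dderiveM _ Pg Ph).
  rewrite (dderiveD _ (polyfunM Pg Pwh (leqnn _)) (polyfunM Ph Pwg (leqnn _))).
  rewrite (dderiveD _ (polyfunM Pg Pvh (leqnn _)) (polyfunM Ph Pvg (leqnn _))).
  rewrite (dderiveM _ Pg Pwh) (dderiveM _ Ph Pwg).
  rewrite (dderiveM _ Pg Pvh) (dderiveM _ Ph Pvg) IHg IHh.
  apply/funext => y /=; rewrite addrACA [RHS]addrACA.
  by rewrite (mulrC (dderive w h y)) (mulrC (dderive w g y)) (addrC (dderive v h y * _)).
Qed.

Lemma dderive_add_cst v {d g} (c : R) :
  polyfun d g -> dderive v (fun y => g y + c) = dderive v g.
Proof.
move=> Pg; rewrite (dderiveD v Pg (polyfunC d c)) dderive_cst.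
by apply/funext => y; exact: addr0.
Qed.

Lemma dderive_add_scale v {d g h} (b : R) : polyfun d g -> polyfun d h ->
  dderive v (fun y => g y + b * h y) = fun y => dderive v g y + b * dderive v h y.
Proof. by move=> Pg Ph; rewrite (dderiveD v Pg (polyfunZ b Ph)) (dderiveZ v b Ph). Qed.

Notation e := (basis_vec R).

Lemma partial2E i j (g : V -> R) : partial2 i j g = dderive (e i) (dderive (e j) g).
Proof. by []. Qed.

Lemma polyfun_partial2 i j {d g} : polyfun d g -> polyfun d.-2 (partial2 i j g).
Proof. by move=> Pg; rewrite partial2E; exact/polyfun_dderive/polyfun_dderive. Qed.

Lemma partial2C i j {d g} : polyfun d g -> partial2 i j g = partial2 j i g.
Proof. exact: dderive_comm. Qed.

Lemma partial2Z i j {d g} (a : R) :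
  polyfun d g -> partial2 i j (fun y => a * g y) = fun y => a * partial2 i j g y.
Proof.
by move=> Pg; rewrite partial2E (dderiveZ _ a Pg) (dderiveZ _ a (polyfun_dderive _ Pg)).
Qed.

Lemma partial2_affine i j {d g h} (b c : R) : polyfun d g -> polyfun d h ->
  partial2 i j (fun y => g y + b * h y + c) = fun y => partial2 i j g y + b * partial2 i j h y.
Proof.
move=> Pg Ph; rewrite partial2E (dderive_add_cst _ _ (polyfunD Pg (polyfunZ b Ph))).
rewrite (dderive_add_scale _ _ Pg Ph).
exact: dderive_add_scale (polyfun_dderive _ Pg) (polyfun_dderive _ Ph).
Qed.

Lemma partial2_sum i j {d I} (s : seq I) {F : I -> V -> R} : (forall k, polyfun d (F k)) ->
  partial2 i j (fun y => \sum_(k <- s) F k y) = fun y => \sum_(k <- s) partial2 i j (F k) y.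
Proof.
move=> PF; rewrite partial2E (dderive_sum _ _ PF).
by rewrite (dderive_sum _ _ (fun k => polyfun_dderive _ (PF k))).
Qed.

Lemma hessian_sym {d g} (x : V) : polyfun d g -> (hessian g x)^T = hessian g x.
Proof. by move=> Pg; apply/matrixP => i j; rewrite !mxE (partial2C i j Pg). Qed.

Lemma polyfun_monomial (m : 'I_n -> nat) (s : seq 'I_n) :
  polyfun (\sum_(i <- s) m i) (fun x : V => \prod_(i <- s) x 0 i ^+ m i).
Proof.
have Pcoord_exp (i : 'I_n) k : polyfun k (fun x : V => x 0 i ^+ k).
  elim: k => [|k IH].
    by rewrite (_ : (fun _ => _) = cst 1); [exact: polyfunC | apply/funext => x].
  rewrite (_ : (fun _ => _) = fun x : V => x 0 i * x 0 i ^+ k).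
    exact: polyfunM (polyfunX 1 i isT) IH _.
  by apply/funext => x; rewrite exprS.
elim: s => [|a s IH].
  rewrite (_ : (fun _ => _) = cst 1); first exact: polyfunC.
  by apply/funext => x; rewrite big_nil.
rewrite big_cons (_ : (fun _ => _) =
    fun x : V => x 0 a ^+ m a * \prod_(i <- s) x 0 i ^+ m i).
  exact: polyfunM (Pcoord_exp a (m a)) IH _.
by apply/funext => x; rewrite big_cons.
Qed.

Lemma poly_deg_le4_polyfun {f : V -> R} : poly_deg_le4 f -> polyfun 4 f.
Proof.
case=> c [c_deg f_eq].
rewrite (_ : f = fun x => \sum_(m : {ffun 'I_n -> 'I_5}) c m * \prod_i x 0 i ^+ m i).
  apply: polyfun_sum => m; case: (leqP (\sum_i (m i : nat)) 4) => deg_m.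
    exact/polyfunZ/(polyfun_widen _ (polyfun_monomial (fun i => m i) _) deg_m).
  rewrite c_deg // (_ : (fun _ => _) = cst 0); first exact: polyfunC.
  by apply/funext => x; rewrite mul0r.
by apply/funext => x; rewrite f_eq.
Qed.

(** * The Steklov function of a quartic *)

Lemma set_coord_shift (s : V) k (h u : R) :
  set_coord s k (h *: 1 + u) = h *: e k + set_coord s k u.
Proof.
apply/rowP => j; rewrite /basis_vec !mxE eqxx /=.
by case: (j == k); rewrite /GRing.scale /= ?mulr1 ?mulr0 ?add0r.
Qed.

Lemma is_derive_set_coord (G : V -> R) k (s : V) (u : R) :
  (forall y, derivable G y (e k)) ->
  is_derive u (1 : R) (fun u => G (set_coord s k u)) (dderive (e k) G (set_coord s k u)).
Proof.
move=> dG.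
have E : (fun h : R => h^-1 *: (((fun u => G (set_coord s k u)) \o shift u) (h *: 1)
            - G (set_coord s k u))) =
         (fun h : R => h^-1 *: ((G \o shift (set_coord s k u)) (h *: e k)
            - G (set_coord s k u))).
  by apply/funext => h /=; rewrite set_coord_shift.
by apply: DeriveDef; rewrite /derivable /derive E //; exact: dG.
Qed.

Lemma Rintegral_set_coord_quartic (G : V -> R) k (s : V) (c t : R) :
  0 < t -> polyfun 4 G ->
  Rintegral (@lebesgue_measure R) `[c - t, c + t] (fun u => G (set_coord s k u)) =
  2 * t * (G (set_coord s k c) + t ^+ 2 / 6 * partial2 k k G (set_coord s k c)
     + t ^+ 4 / 120 * partial2 k k (partial2 k k G) (set_coord s k c)).
Proof.
move=> t_gt0 PG.
pose p j u := iter j (dderive (e k)) G (set_coord s k u).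
have p_deriv j u : is_derive u (1 : R) (p j) (p j.+1 u).
  by apply: is_derive_set_coord => y; exact: polyfun_derivable (polyfun_iter_dderive _ j PG).
have p5 u : p 5 u = 0.
  have P4 := polyfun_iter_dderive (e k) 4 PG; rewrite subnn in P4.
  by rewrite /p /= (dderive_polyfun0 _ P4).
exact: (@Rintegral_deriv_chain4 R p p_deriv p5 c t t_gt0).
Qed.

Definition set_coords (s : seq 'I_n) (x tau : V) : V :=
  \row_j (if j \in s then x 0 j else tau 0 j).

Lemma set_coords_nil x tau : set_coords [::] x tau = tau.
Proof. by apply/rowP => j; rewrite !mxE in_nil. Qed.

Lemma set_coords_id s x : set_coords s x x = x.
Proof. by apply/rowP => j; rewrite !mxE; case: ifP. Qed.

Lemma set_coords_set_coord s x tau k u : k \notin s ->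
  set_coords s x (set_coord tau k u) = set_coord (set_coords s x tau) k u.
Proof.
move=> ks; apply/rowP => j; rewrite !mxE.
by case: ifP => js; case: eqP => // jk; rewrite -jk js in ks.
Qed.

Lemma set_coord_set_coords s x tau k :
  set_coord (set_coords s x tau) k (x 0 k) = set_coords (k :: s) x tau.
Proof. by apply/rowP => j; rewrite !mxE in_cons; case: eqP => [->|]. Qed.

Definition laplacian_on (s : seq 'I_n) (g : V -> R) : V -> R :=
  fun y => \sum_(k <- s) partial2 k k g y.

Lemma laplacian_on_cons k s g y :
  laplacian_on (k :: s) g y = partial2 k k g y + laplacian_on s g y.
Proof. exact: big_cons. Qed.

Lemma polyfun_laplacian_on s {d g} : polyfun d g -> polyfun d.-2 (laplacian_on s g).
Proof. by move=> Pg; apply: polyfun_sum => k; exact: polyfun_partial2. Qed.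

Lemma iter_int_quartic {t : R} {s : seq 'I_n} {g : V -> R} :
  0 < t -> uniq s -> polyfun 4 g -> exists c : R, forall x tau,
  iter_int s g x t tau = (2 * t) ^+ size s *
    (g (set_coords s x tau) + t ^+ 2 / 6 * laplacian_on s g (set_coords s x tau) + c).
Proof.
move=> t_gt0 + Pg; elim: s => [|k s IH].
  by exists 0 => x tau; rewrite /laplacian_on big_nil set_coords_nil expr0 mul1r mulr0 !addr0.
case/andP => ks /IH[c' iter_s].
set a := (2 * t) ^+ size s; set b := t ^+ 2 / 6.
have PL := polyfun_laplacian_on s Pg.
pose G y := g y + b * laplacian_on s g y + c'.
have PG : polyfun 4 G.
  exact/polyfunD/polyfunC/polyfunD/polyfunZ/(polyfun_widen _ PL).
have [k1 L2] := polyfun0_cst (polyfun_partial2 k k PL).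
have [k2 G4] := polyfun0_cst (polyfun_partial2 k k (polyfun_partial2 k k PG)).
exists (c' + b * b * k1 + t ^+ 4 / 120 * k2) => x tau /=.
rewrite (_ : (fun u => _) = fun u => a * G (set_coord (set_coords s x tau) k u)); last first.
  by apply/funext => u; rewrite iter_s set_coords_set_coord.
have /= -> := Rintegral_set_coord_quartic (fun y => a * G y) k (set_coords s x tau)
  (x 0 k) t t_gt0 (polyfunZ a PG).
rewrite (partial2Z _ _ _ PG) (partial2Z _ _ _ (polyfun_partial2 _ _ PG)) G4.
rewrite (partial2_affine _ _ _ _ Pg (polyfun_widen 4 PL isT)) L2.
rewrite set_coord_set_coords laplacian_on_cons (exprS (2 * t)) -/a -/b /G /cst.
ring.
Qed.

Lemma steklov_quartic {f : V -> R} {t : R} : 0 < t -> polyfun 4 f ->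
  exists c : R, (fun y => steklov f y t) =
    fun y => f y + t ^+ 2 / 6 * \sum_k partial2 k k f y + c.
Proof.
move=> t_gt0 Pf; have uniq_s : uniq (rev (enum 'I_n)) by rewrite rev_uniq enum_uniq.
have [c iter_eq] := iter_int_quartic t_gt0 uniq_s Pf.
exists c; apply/funext => y.
rewrite /steklov iter_eq set_coords_id size_rev size_enum_ord mulKf; last first.
  by rewrite expf_neq0 // mulf_neq0 // gt_eqF.
by rewrite /laplacian_on big_rev big_enum; congr (_ + _ * _ + _); apply: eq_bigl.
Qed.

Lemma hessian_steklov_quartic {f : V -> R} {t : R} (x : V) : 0 < t -> polyfun 4 f ->
  hessian (fun y => steklov f y t) x =
    hessian f x + t ^+ 2 / 6 *: \sum_k hessian (partial2 k k f) x.
Proof.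
move=> t_gt0 Pf; have [c ->] := steklov_quartic t_gt0 Pf.
have P2f k : polyfun 2 (partial2 k k f) := polyfun_partial2 k k Pf.
apply/matrixP => i j; rewrite !mxE.
rewrite (partial2_affine _ _ _ _ Pf (polyfun_widen 4 (polyfun_sum _ P2f) isT)).
rewrite (partial2_sum _ _ _ P2f) summxE; congr (_ + _ * _).
by apply: eq_bigr => k _; rewrite mxE.
Qed.

(** * Quadratic forms and the smallest eigenvalue *)

Definition qform (A : 'M[R]_n) (w : V) : R := (w *m A *m w^T) 0 0.

Definition sqnorm (w : V) : R := \sum_k w 0 k ^+ 2.

Lemma qformE A w : qform A w = \sum_k (\sum_j w 0 j * A j k) * w 0 k.
Proof. by rewrite /qform mxE; apply: eq_bigr => k _; rewrite !mxE. Qed.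

Lemma qform1 w : qform 1%:M w = sqnorm w.
Proof. by rewrite /qform mulmx1 mxE; apply: eq_bigr => k _; rewrite !mxE expr2. Qed.

Lemma qform0 A : qform A 0 = 0.
Proof. by rewrite /qform !mul0mx mxE. Qed.

Lemma qformZ A s w : qform A (s *: w) = s ^+ 2 * qform A w.
Proof.
rewrite /qform -scalemxAl linearZ /= -scalemxAr !mxE mulr_sumr [in RHS]mulr_sumr.
by apply: eq_bigr => j _; rewrite mxE; ring.
Qed.

Lemma qform_addZ (A B : 'M[R]_n) b w : qform (A + b *: B) w = qform A w + b * qform B w.
Proof. by rewrite /qform mulmxDr mulmxDl -scalemxAr -scalemxAl !mxE. Qed.

Lemma qformDZ_sym A m w s : A^T = A ->
  qform A (m + s *: w) = qform A m + 2 * s * (m *m A *m w^T) 0 0 + s ^+ 2 * qform A w.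
Proof.
move=> symA.
have cross : (w *m A *m m^T) 0 0 = (m *m A *m w^T) 0 0.
  by rewrite (_ : w *m A *m m^T = (m *m A *m w^T)^T) ?mxE // !trmx_mul trmxK symA mulmxA.
rewrite /qform (_ : (m + s *: w)^T = m^T + s *: w^T); last by rewrite linearD linearZ.
have addE (X Y : 'M[R]_1) : (X + Y) 0 0 = X 0 0 + Y 0 0 by rewrite mxE.
have scaleE (c : R) (X : 'M[R]_1) : (c *: X) 0 0 = c * X 0 0 by rewrite mxE.
rewrite !mulmxDr !mulmxDl -!scalemxAr -!scalemxAl !addE !scaleE cross.
ring.
Qed.

Lemma qform_continuous A : continuous (qform A).
Proof.
rewrite (_ : qform A = fun w => \sum_k (\sum_j w 0 j * A j k) * w 0 k).
  apply: (@polyfun_continuous 2).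
  apply: (polyfun_sum _ (F := fun k w => (\sum_j w 0 j * A j k) * w 0 k)) => k /=.
  apply: (@polyfunM 1 1 2 _ _ _ (polyfunX 1 k isT) isT).
  apply: (polyfun_sum _ (F := fun j w => w 0 j * A j k)) => j /=.
  exact: polyfunM (polyfunX 1 j isT) (polyfunC 0 _) (leqnn 1).
by apply/funext => w; exact: qformE.
Qed.

Lemma sqnorm_ge0 w : 0 <= sqnorm w.
Proof. by apply: sumr_ge0 => k _; exact: sqr_ge0. Qed.

Lemma sqnorm_eq0 w : sqnorm w = 0 -> w = 0.
Proof.
move/eqP; rewrite psumr_eq0 => [/allP w0|k _]; last exact: sqr_ge0.
apply/rowP => k; rewrite mxE; apply/eqP.
by rewrite -sqrf_eq0 (implyP (w0 k (mem_index_enum k))).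
Qed.

Lemma compact_unit_sphere : compact [set w : V | sqnorm w = 1]%classic.
Proof.
apply: bounded_closed_compact.
  exists 1; split; first exact: num_real.
  move=> M M_gt1 w /= w1; rewrite [leLHS]/Num.Def.normr /= mx_normrE.
  apply: bigmax_le => [|[i j] _ /=]; first by rewrite ltW // (lt_trans ltr01).
  apply: le_trans (ltW M_gt1).
  have : w i j ^+ 2 <= 1.
    rewrite ord1 -w1 /sqnorm (bigD1 j) //= lerDl; apply: sumr_ge0 => k _; exact: sqr_ge0.
  by rewrite ler_norml => w2; apply/andP; split; nra.
rewrite (_ : [set w | _]%classic = (sqnorm @^-1` [set 1])%classic); last first.
  by apply/seteqP; split.
apply: preimage_closed => [w _|]; last exact: closed_eq.
by rewrite -(funext qform1); exact: qform_continuous.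
Qed.

Lemma sqnorm_normalize {w} : w != 0 -> sqnorm ((Num.sqrt (sqnorm w))^-1 *: w) = 1.
Proof.
move=> w0; rewrite -qform1 qformZ qform1 exprVn sqr_sqrtr ?sqnorm_ge0 // mulVf //.
by apply: contra w0 => /eqP/sqnorm_eq0 ->.
Qed.

Lemma qform_min_unit_sphere A (v : V) : v != 0 ->
  exists2 m, sqnorm m = 1 & forall w, sqnorm w = 1 -> qform A m <= qform A w.
Proof.
move=> v0; have S0 : ([set w : V | sqnorm w = 1] !=set0)%classic.
  by exists ((Num.sqrt (sqnorm v))^-1 *: v); exact: sqnorm_normalize.
have qA_cont : {within [set w : V | sqnorm w = 1], continuous (qform A)}%classic.
  by apply: continuous_subspaceT; exact: qform_continuous.
have [m /[!inE] m1 m_min] := EVT_min_rV S0 compact_unit_sphere qA_cont.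
by exists m => // w w1; apply: m_min; rewrite inE.
Qed.

Lemma sym_psd_qform_eq0 B m : B^T = B -> (forall w, 0 <= qform B w) ->
  qform B m = 0 -> m *m B = 0.
Proof.
move=> symB B_psd Bm0.
suff cross0 (w : V) : (m *m B *m w^T) 0 0 = 0.
  by apply: sqnorm_eq0; rewrite -qform1 /qform mulmx1; exact: cross0.
set be := (m *m B *m w^T) 0 0; set ga := qform B w.
have ga_ge0 : 0 <= ga := B_psd w.
have ga1_gt0 : 0 < ga + 1 by rewrite ltr_wpDl.
(* along [m + s *: w] the form is [2 s be + s^2 ga]; take [s] near its minimizer *)
have := B_psd (m + (- be / (ga + 1)) *: w).
rewrite qformDZ_sym // Bm0 add0r -/ga -/be.
have -> : 2 * (- be / (ga + 1)) * be + (- be / (ga + 1)) ^+ 2 * ga =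
    - (be ^+ 2 * (ga + 2)) / (ga + 1) ^+ 2 by field; rewrite gt_eqF.
rewrite pmulr_lge0 ?invr_gt0 ?exprn_gt0 // oppr_ge0 => be2_le0.
have : be ^+ 2 <= 0 by nra.
by move=> be2; apply/eqP; rewrite -sqrf_eq0 eq_le be2 sqr_ge0.
Qed.

Lemma qform_ge_eigenvalue_lb {A th} : A^T = A -> (forall a, eigenvalue A a -> th <= a) ->
  forall v, th * sqnorm v <= qform A v.
Proof.
move=> symA A_eig v; have [->|v0] := eqVneq v 0; first by rewrite -qform1 !qform0 mulr0.
have [m m1 m_min] := qform_min_unit_sphere A v v0; set mu := qform A m.
have mu_lb w : mu * sqnorm w <= qform A w.
  have [->|w0] := eqVneq w 0; first by rewrite -qform1 !qform0 mulr0.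
  have := m_min _ (sqnorm_normalize w0).
  rewrite qformZ exprVn sqr_sqrtr ?sqnorm_ge0 // mulrC ler_pdivlMr //.
  by rewrite lt0r sqnorm_ge0 andbT; apply: contra w0 => /eqP/sqnorm_eq0 ->.
pose B := A + (- mu) *: 1%:M.
have qB w : qform B w = qform A w - mu * sqnorm w by rewrite qform_addZ qform1 mulNr.
have mB0 : m *m B = 0.
  apply: sym_psd_qform_eq0 => [|w|]; last by rewrite qB m1 mulr1 subrr.
    by rewrite linearD linearZ /= trmx1 symA.
  by rewrite qB subr_ge0.
have mu_eig : eigenvalue A mu.
  apply/eigenvalueP; exists m.
    by move/eqP: mB0; rewrite mulmxDr -scalemxAr mulmx1 scaleNr subr_eq0 => /eqP.
  by apply/eqP => m0; move/eqP: m1; rewrite m0 -qform1 qform0 eq_sym oner_eq0.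
by apply: le_trans (mu_lb v); rewrite ler_wpM2r ?sqnorm_ge0 ?A_eig.
Qed.

End QuarticSteklov.

Theorem theorem2 (R : realType) (n : nat) (f : 'rV[R]_n -> R)
  (C : 'M[R]_n) (lamC L theta : R) :
  poly_deg_le4 f ->
  (forall x : 'rV[R]_n, C = \sum_i hessian (partial2 i i f) x) ->
  smallest_eig C lamC -> 0 < lamC ->
  0 < L ->
  (exists2 x0 : 'rV[R]_n, eucl_norm x0 <= L & smallest_eig (hessian f x0) theta) ->
  (forall x : 'rV[R]_n, eucl_norm x <= L ->
     forall a, eigenvalue (hessian f x) a -> theta <= a) ->
  forall (x : 'rV[R]_n) (t : R),
    eucl_norm x <= L ->
    Num.sqrt (6 * `|theta| / lamC) < t ->
    psd (hessian (fun y => steklov f y t) x).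
Proof.
(* only the lower bound [theta_lb] on the spectrum is used, not that it is attained *)
move=> deg4 C_eq C_eig lamC_gt0 _ _ theta_lb x t x_L t_gt.
have Pf := poly_deg_le4_polyfun deg4.
have t_gt0 : 0 < t by apply: le_lt_trans t_gt; exact: sqrtr_ge0.
have C_sym : C^T = C.
  rewrite (C_eq x) linear_sum; apply: eq_bigr => k _.
  exact: hessian_sym (polyfun_partial2 k k Pf).
have shift_ge0 : 0 <= theta + t ^+ 2 / 6 * lamC.
  have bound_ge0 : 0 <= 6 * `|theta| / lamC by rewrite divr_ge0 ?mulr_ge0 ?(ltW lamC_gt0).
  have : 6 * `|theta| / lamC < t ^+ 2.
    by rewrite -(sqr_sqrtr bound_ge0); have := sqrtr_ge0 (6 * `|theta| / lamC); nra.
  rewrite ltr_pdivrMr // => /ltW; have := ler_norm (- theta); rewrite normrN; lra.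
move=> v; rewrite (hessian_steklov_quartic x t_gt0 Pf) -(C_eq x).
change (0 <= qform (hessian f x + t ^+ 2 / 6 *: C) v); rewrite qform_addZ.
have H_lb := qform_ge_eigenvalue_lb (hessian_sym x Pf) (theta_lb x x_L) v.
have C_lb := qform_ge_eigenvalue_lb C_sym C_eig.2 v.
have : 0 <= t ^+ 2 / 6 * (qform C v - lamC * sqnorm v).
  by rewrite mulr_ge0 ?subr_ge0 // divr_ge0 ?sqr_ge0.
have := mulr_ge0 shift_ge0 (sqnorm_ge0 v); nra.
Qed.
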